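(* Let $N\ge1$ be an integer, $d>0$, $T>0$, and $0\le s_1\le\dots\le s_N$. Let $x^*$ be the optimal solution of the (assumed feasible) problem $$\min_{x\in\mathbb{R}^{N+1}}\ \sum_{i=1}^{N+1}x_i^2$$ subject to - $\sum_{i=1}^k x_i\ge s_k+kd$ for $1\le k\le N$, - $x_i\ge 2d$ for $2\le i\le N$, - $x_{N+1}\ge d$, - $\sum_{i=1}^{N+1}x_i=T+Nd$. Then $x_1^*>x_2^*$ only if $x_1^*=s_1+d$, and $x_1^*<x_2^*$ only if $x_i^*=2d$ for all $2\le i\le N$.
   Context: The problem arises from age-of-information minimization for a single energy harvesting transmitter with energy arrival times $s_k$, fixed service time $d$, and session length $T$. Its objective is strictly convex, so the optimal solution is unique. *)

(* concrete reals R. Vectors x in R^{N+1} are represented as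
   x : nat -> R, with only the entries x 1, ..., x (N+1) being meaningful. *)
From Stdlib Require Import Reals.
Open Scope R_scope.

Fixpoint psum (x : nat -> R) (k : nat) : R :=
  match k with
  | O => 0
  | S k' => psum x k' + x k
  end.

Definition aoi_obj (N : nat) (x : nat -> R) : R :=
  psum (fun i => (x i)^2) (S N).

Definition aoi_feasible (N : nat) (d T : R) (s : nat -> R) (x : nat -> R) : Prop :=
  (forall k, (1 <= k <= N)%nat -> psum x k >= s k + INR k * d) /\
  (forall i, (2 <= i <= N)%nat -> x i >= 2 * d) /\
  x (S N) >= d /\
  psum x (S N) = T + INR N * d.

Definition aoi_optimal (N : nat) (d T : R) (s : nat -> R) (x : nat -> R) : Prop :=
  aoi_feasible N d T s x /\
  forall y, aoi_feasible N d T s y -> aoi_obj N x <= aoi_obj N y.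

(* Exchange argument.  Moving an amount e from coordinate b to coordinate a
   changes the objective by 2 e (x_a - x_b + e), which is negative for
   0 < e < x_b - x_a; so at the optimum every such transfer must be
   infeasible.  If x_1 > x_2 and the first prefix constraint were slack, a
   small transfer from x_1 to x_2 would stay feasible (it only lowers the
   first prefix sum).  If x_1 < x_j for some 2 <= j <= N and x_j > 2d, a small
   transfer from x_j to x_1 would stay feasible (it only raises prefix sums).
   Applied to j = 2 this gives x_2 = 2d, hence x_1 < 2d <= x_i for every
   2 <= i <= N, and applying it to i gives the second claim. *)
From Stdlib Require Import Reals Lra Lia.
Open Scope R_scope.

Lemma psum_ext (f g : nat -> R) (k : nat) :
  (forall n, f n = g n) -> psum f k = psum g k.
Proof.
  intros Hfg; induction k as [|k IH]; simpl; [reflexivity|].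
  now rewrite IH, Hfg.
Qed.

Lemma psum_plus (f g : nat -> R) (k : nat) :
  psum (fun n => f n + g n) k = psum f k + psum g k.
Proof. induction k as [|k IH]; simpl; [ring | rewrite IH; ring]. Qed.

Lemma psum_point (a k : nat) (c : R) : (1 <= a)%nat ->
  psum (fun n => if Nat.eqb n a then c else 0) k = if Nat.leb a k then c else 0.
Proof.
  intros Ha; induction k as [|k IH]; cbn [psum].
  - destruct (Nat.leb_spec a 0); [lia | reflexivity].
  - rewrite IH.
    destruct (Nat.eqb_spec (S k) a), (Nat.leb_spec a k), (Nat.leb_spec a (S k));
      try lia; lra.
Qed.

Lemma psum_update2 (f g : nat -> R) (a b k : nat) :
  (1 <= a)%nat -> (1 <= b)%nat -> a <> b ->
  (forall n, n <> a -> n <> b -> g n = f n) ->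
  psum g k = psum f k + (if Nat.leb a k then g a - f a else 0)
                      + (if Nat.leb b k then g b - f b else 0).
Proof.
  intros Ha Hb Hab Hfg.
  rewrite <- (psum_point a k (g a - f a) Ha), <- (psum_point b k (g b - f b) Hb),
    <- !psum_plus.
  apply psum_ext; intros n.
  destruct (Nat.eqb_spec n a) as [Hna|Hna], (Nat.eqb_spec n b) as [Hnb|Hnb].
  - lia.
  - subst n; ring.
  - subst n; ring.
  - rewrite (Hfg n Hna Hnb); ring.
Qed.

Definition transfer (x : nat -> R) (a b : nat) (e : R) : nat -> R :=
  fun n => if Nat.eqb n a then x n + e else if Nat.eqb n b then x n - e else x n.

Section Transfer.

Variables (x : nat -> R) (a b : nat) (e : R).
Hypotheses (Ha : (1 <= a)%nat) (Hb : (1 <= b)%nat) (Hab : a <> b).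

Lemma transfer_at_receiver : transfer x a b e a = x a + e.
Proof. unfold transfer; now rewrite Nat.eqb_refl. Qed.

Lemma transfer_at_donor : transfer x a b e b = x b - e.
Proof.
  unfold transfer; rewrite Nat.eqb_refl.
  destruct (Nat.eqb_spec b a); [lia | reflexivity].
Qed.

Lemma transfer_elsewhere (n : nat) : n <> a -> n <> b -> transfer x a b e n = x n.
Proof.
  intros Hna Hnb; unfold transfer.
  now destruct (Nat.eqb_spec n a), (Nat.eqb_spec n b).
Qed.

Lemma psum_transfer (k : nat) :
  psum (transfer x a b e) k =
  psum x k + (if Nat.leb a k then e else 0) - (if Nat.leb b k then e else 0).
Proof.
  rewrite (psum_update2 x _ a b k Ha Hb Hab transfer_elsewhere).
  rewrite transfer_at_receiver, transfer_at_donor.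
  destruct (Nat.leb a k), (Nat.leb b k); lra.
Qed.

Lemma aoi_obj_transfer (N : nat) :
  (a <= S N)%nat -> (b <= S N)%nat ->
  aoi_obj N (transfer x a b e) = aoi_obj N x + 2 * e * (x a - x b + e).
Proof.
  intros HaN HbN; unfold aoi_obj.
  rewrite (psum_update2 (fun i => x i ^ 2) (fun i => transfer x a b e i ^ 2) a b (S N) Ha Hb Hab)
    by (intros n Hna Hnb; now rewrite transfer_elsewhere).
  rewrite transfer_at_receiver, transfer_at_donor.
  destruct (Nat.leb_spec a (S N)), (Nat.leb_spec b (S N)); try lia; ring.
Qed.

End Transfer.

Section ExchangeArgument.

Variables (N : nat) (d T : R) (s x : nat -> R).

Lemma transfer_first_to_second_feasible (e : R) :
  (1 <= N)%nat -> 0 <= e -> e <= x 1%nat - (s 1%nat + d) ->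
  aoi_feasible N d T s x -> aoi_feasible N d T s (transfer x 2 1 e).
Proof.
  intros HN He He1 [Hpre [Hmid [Hlast Htot]]].
  repeat split.
  - intros k Hk; specialize (Hpre k Hk).
    rewrite psum_transfer by lia.
    destruct (Nat.leb_spec 2 k), (Nat.leb_spec 1 k); try lia; [lra|].
    replace k with 1%nat in * by lia.
    simpl psum in *; simpl INR in *; lra.
  - intros i Hi; specialize (Hmid i Hi).
    destruct (Nat.eq_dec i 2) as [->|Hi2].
    + rewrite transfer_at_receiver; lra.
    + rewrite transfer_elsewhere by lia; exact Hmid.
  - destruct (Nat.eq_dec (S N) 2) as [HN2|HN2].
    + rewrite HN2 in *; rewrite transfer_at_receiver; lra.
    + rewrite transfer_elsewhere by lia; exact Hlast.
  - rewrite psum_transfer by lia.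
    destruct (Nat.leb_spec 2 (S N)), (Nat.leb_spec 1 (S N)); try lia; lra.
Qed.

Lemma transfer_to_first_feasible (j : nat) (e : R) :
  (2 <= j <= N)%nat -> 0 <= e -> e <= x j - 2 * d ->
  aoi_feasible N d T s x -> aoi_feasible N d T s (transfer x 1 j e).
Proof.
  intros Hj He Hej [Hpre [Hmid [Hlast Htot]]].
  repeat split.
  - intros k Hk; specialize (Hpre k Hk).
    rewrite psum_transfer by lia.
    destruct (Nat.leb_spec 1 k), (Nat.leb_spec j k); try lia; lra.
  - intros i Hi; specialize (Hmid i Hi).
    destruct (Nat.eq_dec i j) as [->|Hij].
    + rewrite transfer_at_donor by lia; lra.
    + rewrite transfer_elsewhere by lia; exact Hmid.
  - rewrite transfer_elsewhere by lia; exact Hlast.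
  - rewrite psum_transfer by lia.
    destruct (Nat.leb_spec 1 (S N)), (Nat.leb_spec j (S N)); try lia; lra.
Qed.

Hypothesis Hopt : aoi_optimal N d T s x.

Lemma optimal_transfer_infeasible (a b : nat) (e : R) :
  (1 <= a <= S N)%nat -> (1 <= b <= S N)%nat -> a <> b ->
  0 < e -> e < x b - x a -> ~ aoi_feasible N d T s (transfer x a b e).
Proof.
  intros Ha Hb Hab He Heb Hfeas.
  destruct Hopt as [_ Hmin].
  specialize (Hmin _ Hfeas).
  rewrite aoi_obj_transfer in Hmin by lia.
  nra.
Qed.

Lemma optimal_first_gt_second :
  (1 <= N)%nat -> x 1%nat > x 2%nat -> x 1%nat = s 1%nat + d.
Proof.
  intros HN Hgt.
  destruct Hopt as [[Hpre _] _].
  assert (Hfirst : x 1%nat >= s 1%nat + d)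
    by (specialize (Hpre 1%nat ltac:(lia)); simpl psum in Hpre; simpl INR in Hpre; lra).
  destruct (Rle_lt_or_eq_dec (s 1%nat + d) (x 1%nat)) as [Hslack|]; [lra| |easy].
  exfalso.
  set (e := Rmin ((x 1%nat - x 2%nat) / 2) (x 1%nat - (s 1%nat + d))).
  assert (He0 : 0 < e) by (apply Rmin_glb_lt; lra).
  apply (optimal_transfer_infeasible 2 1 e ltac:(lia) ltac:(lia) ltac:(lia) He0).
  - assert (e <= (x 1%nat - x 2%nat) / 2) by apply Rmin_l; lra.
  - apply transfer_first_to_second_feasible; [easy | lra | apply Rmin_r | apply Hopt].
Qed.

Lemma optimal_tight_above_first (j : nat) :
  (2 <= j <= N)%nat -> x 1%nat < x j -> x j = 2 * d.
Proof.
  intros Hj Hlt.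
  destruct Hopt as [[_ [Hmid _]] _].
  specialize (Hmid j Hj).
  destruct (Rle_lt_or_eq_dec (2 * d) (x j)) as [Hslack|]; [lra| |easy].
  exfalso.
  set (e := Rmin ((x j - x 1%nat) / 2) (x j - 2 * d)).
  assert (He0 : 0 < e) by (apply Rmin_glb_lt; lra).
  apply (optimal_transfer_infeasible 1 j e ltac:(lia) ltac:(lia) ltac:(lia) He0).
  - assert (e <= (x j - x 1%nat) / 2) by apply Rmin_l; lra.
  - apply transfer_to_first_feasible; [easy | lra | apply Rmin_r | apply Hopt].
Qed.

End ExchangeArgument.

Theorem lemma2 (N : nat) (d T : R) (s : nat -> R) (xs : nat -> R) :
  (1 <= N)%nat -> 0 < d -> 0 < T ->
  0 <= s 1%nat ->
  (forall k, (1 <= k)%nat -> (k < N)%nat -> s k <= s (S k)) ->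
  aoi_optimal N d T s xs ->
  (xs 1%nat > xs 2%nat -> xs 1%nat = s 1%nat + d) /\
  (xs 1%nat < xs 2%nat -> forall i, (2 <= i <= N)%nat -> xs i = 2 * d).
Proof.
  intros HN _ _ _ _ Hopt.
  split.
  - exact (optimal_first_gt_second N d T s xs Hopt HN).
  - intros H12 i Hi.
    assert (Hx2 : xs 2%nat = 2 * d)
      by (apply (optimal_tight_above_first N d T s xs Hopt); [lia | easy]).
    assert (Hxi : xs i >= 2 * d) by (destruct Hopt as [[_ [Hmid _]] _]; exact (Hmid i Hi)).
    apply (optimal_tight_above_first N d T s xs Hopt i Hi); lra.
Qed.
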